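(* For every $k\ge1$, as polynomials in $j$, \begin{align*} \sigma_k(j)&=\frac{1}{2^kk!}j^{2k}-\frac{2k+1}{3\cdot2^k(k-1)!}j^{2k-1}+O(j^{2k-2}),\\ Q_k(j)&=\frac{(-1)^k}{2^kk!}j^{2k}+\frac{(-1)^k(2k-5)}{3\cdot2^k(k-1)!}j^{2k-1}+O(j^{2k-2}), \end{align*} where $O(j^{2k-2})$ denotes a polynomial in $j$ of degree at most $2k-2$.
   Context: For positive integers $j$: $\sigma_0(j)=1$, $\sigma_i(j)=\sum_{1\le n_1<\cdots<n_i\le j-1}n_1\cdots n_i$ for $1\le i\le j-1$, $\sigma_i(j)=0$ for $i\ge j$; $Q_0(j)=1$ and $Q_k(j)=-\sum_{i=1}^k\sigma_i(j)Q_{k-i}(j)$ for $k\ge1$. For each fixed $k$, $\sigma_k(j)$ and $Q_k(j)$ agree on all positive integers $j$ with polynomials in $j$ with rational coefficients, and are identified with these polynomials. *)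

From mathcomp Require Import all_boot all_order all_algebra.
Set Implicit Arguments. Unset Strict Implicit. Unset Printing Implicit Defensive.
Import Order.TTheory GRing.Theory Num.Theory.
Local Open Scope ring_scope.

(* sigma i j = sum over i-element subsets {n_1 < ... < n_i} of {1,...,j-1}
   of n_1 * ... * n_i.  An element a : 'I_(j-1) encodes n = a+1.
   For i >= j the sum is empty, hence 0; sigma 0 j = 1. *)
Definition sigma (i j : nat) : rat :=
  \sum_(A : {set 'I_(j.-1)} | #|A| == i) \prod_(a in A) ((a : nat).+1)%:R.

Fixpoint Q_seq (j n : nat) : seq rat :=
  match n with
  | 0 => [:: 1]
  | n'.+1 =>
      let s := Q_seq j n' in
      rcons s (- \sum_(1 <= i < n'.+2) sigma i j * nth 0 s (n'.+1 - i))
  end.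

Definition Q (k j : nat) : rat := nth 0 (Q_seq j k) k.

From mathcomp Require Import all_boot all_order all_algebra.
From mathcomp Require Import ring zify.
Set Implicit Arguments. Unset Strict Implicit. Unset Printing Implicit Defensive.
Import Order.TTheory GRing.Theory Num.Theory.
Local Open Scope ring_scope.

(* Since sigma_(k+1)(n+2) = sigma_(k+1)(n+1) + (n+1) sigma_k(n+1), the polynomial sigma_(k+1)
   is the antidifference of X sigma_k vanishing at 1; an antidifference of a polynomial
   a X^d + b X^(d-1) + ... has top coefficients a/(d+1) and (b - a d/2)/d, which gives the
   leading coefficients of sigma_k by induction.  The Q_k(j) are the coefficients of the inverse
   of the power series sum_i sigma_i(j) t^i, so the recursion Q_k = - sum_(i>=1) sigma_i Q_(k-i)
   can be run on polynomials.  The top two coefficients of a product of polynomials of degrees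
   m and n combine like the dual numbers (a + b e)(a' + b' e) with e^2 = 0, so those of Q_k obey
   the same convolution recursion; the closed forms satisfy it because
   sum_i (-1)^(m-i) C(m,i) = 0 for m >= 1 and sum_i (-1)^(m-i) i C(m,i) = 0 for m >= 2. *)

Section TopCoefficients.
Variable R : nzRingType.
Implicit Types (p q : {poly R}) (a b c : R).

(* The coefficient of X^(d-1), taken to be 0 (not p`_0) when d = 0. *)
Definition subcoef p d : R := if d is d'.+1 then p`_d' else 0.

Lemma subcoefE p d : (0 < d)%N -> subcoef p d = p`_d.-1.
Proof. by case: d. Qed.

Lemma subcoefD p q d : subcoef (p + q) d = subcoef p d + subcoef q d.
Proof. by case: d => [|d] /=; rewrite ?addr0 ?coefD. Qed.

Lemma subcoefN p d : subcoef (- p) d = - subcoef p d.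
Proof. by case: d => [|d] /=; rewrite ?oppr0 ?coefN. Qed.

Lemma subcoefZ c p d : subcoef (c *: p) d = c * subcoef p d.
Proof. by case: d => [|d] /=; rewrite ?mulr0 ?coefZ. Qed.

Lemma coefM_size p q m n : (size p <= m.+1)%N -> (size q <= n.+1)%N ->
  (p * q)`_(m + n) = p`_m * q`_n.
Proof.
move=> /leq_sizeP p_hi /leq_sizeP q_hi; have m_lt : (m < (m + n).+1)%N by lia.
rewrite coefM (bigD1 (Ordinal m_lt)) //= addKn big1 ?addr0 // => j.
rewrite -val_eqE /= => nej; have [ltjm|ltmj] : (j < m \/ m < j)%N by lia.
  by rewrite q_hi ?mulr0 //; lia.
by rewrite p_hi ?mul0r.
Qed.

Lemma subcoefM_size p q m n : (size p <= m.+1)%N -> (size q <= n.+1)%N ->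
  subcoef (p * q) (m + n) = p`_m * subcoef q n + subcoef p m * q`_n.
Proof.
case: m => [|m] sp.
  by rewrite /= mul0r addr0; case: n => [|n] /=; rewrite ?mulr0 // {1}(size1_polyC sp) coefCM.
case: n => [|n] sq; first by rewrite /= mulr0 add0r addn0 {1}(size1_polyC sq) coefMC.
move/leq_sizeP: sp => p_hi; move/leq_sizeP: sq => q_hi.
have [m_lt m1_lt] : (m < (m + n).+2 /\ m.+1 < (m + n).+2)%N by lia.
rewrite (_ : (m.+1 + n.+1 = (m + n).+2)%N) /=; last by lia.
rewrite coefM (bigD1 (Ordinal m_lt)) //= (bigD1 (Ordinal m1_lt)) /=; last first.
  by rewrite -val_eqE /=; lia.
rewrite big1 ?addr0 => [|j].
  by rewrite (_ : ((m + n).+1 - m = n.+1)%N) 1?(_ : ((m + n).+1 - m.+1 = n)%N) 1?addrC //; lia.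
rewrite -!val_eqE /= => /andP[nej1 nej0]; have [ltjm|ltmj] : (j < m \/ m.+1 < j)%N by lia.
  by rewrite q_hi ?mulr0 //; lia.
by rewrite p_hi ?mul0r.
Qed.

Definition top_coefs p d a b : Prop :=
  [/\ (size p <= d.+1)%N, p`_d = a & subcoef p d = b].

Lemma top_coefs0 d : top_coefs 0 d 0 0.
Proof. by split; rewrite ?size_poly0 ?coef0 //; case: d => //= d; rewrite coef0. Qed.

Lemma top_coefs1 : top_coefs 1 0 1 0.
Proof. by split; rewrite ?size_poly1 ?coefC. Qed.

Lemma top_coefsC c d : top_coefs c%:P d.+2 0 0.
Proof.
by split; rewrite /= ?coefC // (leq_trans (size_polyC_leq1 c)).
Qed.

Lemma top_coefsXn n : top_coefs 'X^n n 1 0.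
Proof.
split; rewrite ?size_polyXn ?coefXn ?eqxx //.
by case: n => //= n; rewrite coefXn ltn_eqF.
Qed.

Lemma top_coefsD p q d a b a' b' :
  top_coefs p d a b -> top_coefs q d a' b' -> top_coefs (p + q) d (a + a') (b + b').
Proof.
case=> sp pa pb [sq qa qb]; split; rewrite ?coefD ?subcoefD ?pa ?qa ?pb ?qb //.
by rewrite (leq_trans (size_polyD _ _)) // geq_max sp sq.
Qed.

Lemma top_coefsN p d a b : top_coefs p d a b -> top_coefs (- p) d (- a) (- b).
Proof. by case=> sp pa pb; split; rewrite ?size_polyN ?coefN ?subcoefN ?pa ?pb. Qed.

Lemma top_coefsZ c p d a b : top_coefs p d a b -> top_coefs (c *: p) d (c * a) (c * b).
Proof.
case=> sp pa pb; split; rewrite ?coefZ ?subcoefZ ?pa ?pb //.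
exact: leq_trans (size_scale_leq _ _) sp.
Qed.

Lemma top_coefs_sum (I : eqType) (r : seq I) (F : I -> {poly R}) d (a b : I -> R) :
  {in r, forall i, top_coefs (F i) d (a i) (b i)} ->
  top_coefs (\sum_(i <- r) F i) d (\sum_(i <- r) a i) (\sum_(i <- r) b i).
Proof.
elim: r => [|i r IHr] Fr; first by rewrite !big_nil; apply: top_coefs0.
rewrite !big_cons; apply: top_coefsD; first by apply: Fr; rewrite mem_head.
by apply: IHr => j rj; apply: Fr; rewrite in_cons rj orbT.
Qed.

Lemma top_coefsM p q m n a b a' b' :
  top_coefs p m a b -> top_coefs q n a' b' ->
  top_coefs (p * q) (m + n) (a * a') (a * b' + b * a').
Proof.
case=> sp <- <- [sq <- <-]; split; rewrite ?coefM_size ?subcoefM_size //.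
by apply: leq_trans (size_mul_leq _ _) _; move: sp sq; lia.
Qed.

Lemma top_coefsS p d a b : top_coefs p d a b -> top_coefs p d.+1 0 a.
Proof.
by case=> sp pa pb; split; rewrite /= ?pa //; [apply: leqW | apply/(leq_sizeP _ _ sp)].
Qed.

Lemma top_coefs_lead0 p d b : top_coefs p d.+1 0 b -> top_coefs p d b (subcoef p d).
Proof.
case=> sp p0 pb; split => //; apply/leq_sizeP => j; rewrite leq_eqVlt.
by case/orP => [/eqP <- //|]; apply/leq_sizeP.
Qed.

Lemma coef_Xadd1_exp n i : (('X + 1) ^+ n)`_i = 'C(n, i)%:R :> R.
Proof.
rewrite exprD1n coef_sum.
under eq_bigr => j _ do rewrite coefMn coefXn.
have [le_in|lt_ni] := leqP i n; last first.
  rewrite bin_small // big1 // => j _.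
  by rewrite (_ : i == j = false) ?mul0rn //; apply/eqP => eij; move: (ltn_ord j); lia.
rewrite (bigD1 (Ordinal (le_in : (i < n.+1)%N))) //= eqxx mulr1n big1 ?addr0 // => j.
by rewrite -val_eqE /= eq_sym => /negbTE ->; rewrite mul0rn.
Qed.

Lemma top_coefs_Xadd1_expB n :
  top_coefs (('X + 1) ^+ n.+1 - 'X^(n.+1)) n n.+1%:R 'C(n.+1, 2)%:R.
Proof.
split; rewrite ?coefB ?coef_Xadd1_exp ?coefXn.
- apply/leq_sizeP => i; rewrite coefB coef_Xadd1_exp coefXn leq_eqVlt.
  case/orP => [/eqP <-|lt_ni]; first by rewrite binn eqxx subrr.
  by rewrite bin_small // gtn_eqF // subrr.
- by rewrite binSn ltn_eqF ?subr0.
- case: n => [|n] //=; rewrite coefB coef_Xadd1_exp coefXn ltn_eqF ?subr0 //.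
  by rewrite -(bin_sub (_ : 2 <= n.+2)%N) // subn2.
Qed.

End TopCoefficients.

(* For d = 0 the second value is 0, since x / 0 = 0. *)
Lemma antidifference (R : numFieldType) d (q : {poly R}) a b : top_coefs q d a b ->
  {S : {poly R} | forall x, S.[x + 1] - S.[x] = q.[x] &
                  top_coefs S d.+1 (a / d.+1%:R) ((b - a * d%:R / 2) / d%:R)}.
Proof.
elim: d q a b => [|d IHd] q a b qab.
  have [sq <- <-] := qab; exists (q`_0 *: 'X^1) => [x|].
    by rewrite !hornerZ !hornerXn [in RHS](size1_polyC sq) hornerC; ring.
  by have := top_coefsZ q`_0 (top_coefsXn R 1); rewrite /= mulr1 invr0 !mulr0 divr1.
pose c := a / d.+2%:R.
have c_d2 : c * d.+2%:R = a by rewrite mulfVK ?pnatr_eq0.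
have c_bin : c * 'C(d.+2, 2)%:R = a * d.+1%:R / 2.
  have bin2E : ('C(d.+2, 2) * 2 = d.+2 * d.+1)%N.
    by rewrite mulnC (mul_bin_left _ 1) bin1 subn1 mulnC.
  have n2 : 2 != 0 :> R by rewrite pnatr_eq0.
  by rewrite -(mulfK n2 'C(_, _)%:R) -natrM bin2E natrM !mulrA c_d2.
have := top_coefsD qab (top_coefsN (top_coefsZ c (top_coefs_Xadd1_expB R d.+1))).
rewrite c_d2 subrr c_bin => /top_coefs_lead0 /IHd [S' dS' topS'].
exists (c *: 'X^(d.+2) + S') => [x|].
  have := dS' x; rewrite !(hornerD, hornerN, hornerZ, hornerXn) horner_exp hornerD hornerX hornerC.
  by move=> dS'x; rewrite -[q.[x]](subrK (c * ((x + 1) ^+ d.+2 - x ^+ d.+2))) -dS'x; ring.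
have := top_coefsD (top_coefsZ c (top_coefsXn R d.+2)) (top_coefsS topS').
by rewrite mulr1 mulr0 addr0 add0r.
Qed.

Definition prodXsub_upto n : {poly rat} :=
  \prod_(x <- [seq i.+1%:R | i <- iota 0 n]) ('X - x%:P).

Lemma sigma_prodXsub_upto k n : (k <= n)%N ->
  sigma k n.+1 = (-1) ^+ k * (prodXsub_upto n)`_(n - k).
Proof.
move=> le_kn; rewrite coef_prod_XsubC size_map size_iota ?leq_subr // subKn //.
rewrite mulrA -exprD -signr_odd oddD addbb mul1r.
apply: eq_bigr => A _; apply: eq_bigr => i _.
by rewrite (nth_map 0%N) ?size_iota // nth_iota.
Qed.

Lemma sigma_eq0 k n : (n < k)%N -> sigma k n.+1 = 0.
Proof.
move=> lt_nk; rewrite /sigma big_pred0 // => A.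
by apply/negbTE; have := max_card A; rewrite card_ord; lia.
Qed.

Lemma sigma0 j : sigma 0 j = 1.
Proof.
by rewrite /sigma (eq_bigl (pred1 set0)) ?big_pred1_eq ?big_set0 // => A; rewrite /= cards_eq0.
Qed.

Lemma sigmaS k n : sigma k.+1 n.+2 = sigma k.+1 n.+1 + n.+1%:R * sigma k n.+1.
Proof.
have [lt_nk|le_kn] := ltnP n k.
  by rewrite !sigma_eq0 ?mulr0 ?addr0 //; apply: leq_trans lt_nk _.
have prodS : prodXsub_upto n.+1 = prodXsub_upto n * ('X - n.+1%:R%:P).
  by rewrite /prodXsub_upto -[n.+1]addn1 iotaD map_cat big_cat big_seq1 add0n addn1.
rewrite (@sigma_prodXsub_upto k.+1 n.+1) // (sigma_prodXsub_upto le_kn) prodS mulrBr coefB coefMX coefMC subSS.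
move: le_kn; rewrite leq_eqVlt => /orP[/eqP <-|lt_kn].
- by rewrite subnn sigma_eq0 //= exprS; ring.
- by rewrite -(subnSK lt_kn) /= sigma_prodXsub_upto // exprS; ring.
Qed.

Lemma natr_fact_neq0 k : k`!%:R != 0 :> rat.
Proof. by rewrite pnatr_eq0 -lt0n fact_gt0. Qed.

Lemma exp2_neq0 k : 2 ^+ k != 0 :> rat.
Proof. by rewrite expf_neq0 ?pnatr_eq0. Qed.

Definition sigma_lead k : rat := 1 / (2 ^+ k * k`!%:R).

Definition sigma_sublead k : rat :=
  - ((2 * k + 1)%:R * k%:R / (3 * 2 ^+ k * k`!%:R)).

Lemma sigma_lead0 : sigma_lead 0 = 1.
Proof. by rewrite /sigma_lead fact0 expr0 mulr1n mulr1. Qed.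

Lemma sigma_sublead0 : sigma_sublead 0 = 0.
Proof. by rewrite /sigma_sublead mulr0 mul0r oppr0. Qed.

Lemma sigma_leadS k : sigma_lead k / (2 * k).+2%:R = sigma_lead k.+1.
Proof.
rewrite /sigma_lead factS exprS (_ : (2 * k).+2 = 2 * k.+1)%N ?natrM; last by lia.
by field; rewrite natr_fact_neq0 exp2_neq0 nat1r pnatr_eq0.
Qed.

Lemma sigma_subleadS k :
  (sigma_sublead k - sigma_lead k * (2 * k).+1%:R / 2) / (2 * k).+1%:R =
  sigma_sublead k.+1.
Proof.
have k1 : k.+1%:R = k%:R + 1 :> rat by rewrite natr1.
have k21 : (2 * k).+1%:R = 2 * k%:R + 1 :> rat by rewrite -natr1 natrM.
have k23 : (2 * k.+1 + 1)%:R = 2 * k%:R + 3 :> rat by rewrite addn1 mulnS -natr1 natrD natrM; ring.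
rewrite /sigma_lead /sigma_sublead factS exprS natrM addn1 !k21 k23 k1.
by field; rewrite natr_fact_neq0 exp2_neq0 -k1 -k21 !pnatr_eq0.
Qed.

Lemma sigma_poly_spec k : {P : {poly rat} | forall n, P.[n.+1%:R] = sigma k n.+1 &
  top_coefs P (2 * k) (sigma_lead k) (sigma_sublead k)}.
Proof.
elim: k => [|k [P Psigma Ptop]].
  exists 1 => [n|]; first by rewrite hornerC sigma0.
  by rewrite sigma_lead0 sigma_sublead0; apply: top_coefs1.
have := top_coefsM (top_coefsXn rat 1) Ptop; rewrite !mul1r mul0r addr0 add1n.
case/antidifference=> S dS Stop; exists (S - S.[1]%:P) => [n|].
  elim: n => [|n IHn]; first by rewrite hornerD hornerN hornerC subrr sigma_eq0.
  have := dS n.+1%:R; rewrite hornerM hornerXn Psigma natr1 => dSn.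
  by rewrite sigmaS -IHn -dSn !hornerD !hornerN !hornerC; ring.
rewrite (_ : 2 * k.+1 = (2 * k).+2)%N -?sigma_leadS -?sigma_subleadS; last by lia.
by have := top_coefsD Stop (top_coefsC (- S.[1]) (2 * k)); rewrite polyCN !addr0.
Qed.

Definition sigma_poly k : {poly rat} := s2val (sigma_poly_spec k).

Lemma sigma_polyE k n : (sigma_poly k).[n.+1%:R] = sigma k n.+1.
Proof. exact: (s2valP (sigma_poly_spec k)) n. Qed.

Lemma top_coefs_sigma_poly k :
  top_coefs (sigma_poly k) (2 * k) (sigma_lead k) (sigma_sublead k).
Proof. exact: s2valP' (sigma_poly_spec k). Qed.

Section SeriesInverse.
Variable R : nzRingType.
Implicit Types s : nat -> R.

(* The coefficients of the inverse of the power series 1 + sum_(i >= 1) s i t^i;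
   the constant term s 0 is ignored. *)
Fixpoint series_inv_seq s n : seq R :=
  if n is n'.+1 then
    let l := series_inv_seq s n' in
    rcons l (- \sum_(1 <= i < n'.+2) s i * nth 0 l (n'.+1 - i))
  else [:: 1].

Definition series_inv s k : R := nth 0 (series_inv_seq s k) k.

Lemma size_series_inv_seq s n : size (series_inv_seq s n) = n.+1.
Proof. by elim: n => //= n IHn; rewrite size_rcons IHn. Qed.

Lemma nth_series_inv_seq s n m : (m <= n)%N -> nth 0 (series_inv_seq s n) m = series_inv s m.
Proof.
elim: n => [|n IHn]; first by rewrite leqn0 => /eqP ->.
rewrite leq_eqVlt => /orP[/eqP -> //|lt_mn].
by rewrite /= nth_rcons size_series_inv_seq lt_mn IHn.
Qed.

Lemma series_inv0 s : series_inv s 0 = 1.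
Proof. by []. Qed.

Lemma series_invS s k :
  series_inv s k.+1 = - \sum_(1 <= i < k.+2) s i * series_inv s (k.+1 - i).
Proof.
rewrite {1}/series_inv /= nth_rcons size_series_inv_seq ltnn eqxx.
by congr (- _); apply: eq_big_nat => i i_in; rewrite nth_series_inv_seq //; lia.
Qed.

End SeriesInverse.

Lemma rmorph_series_inv (R S : nzRingType) (f : {rmorphism R -> S}) (s : nat -> R) (t : nat -> S) :
  f \o s =1 t -> forall k : nat, f (series_inv s k) = series_inv t k.
Proof.
move=> fst; elim/ltn_ind=> -[|k] IHk; first by rewrite !series_inv0 rmorph1.
rewrite !series_invS rmorphN rmorph_sum; congr (- _); apply: eq_big_nat => i /andP[i_gt0 _].
by rewrite rmorphM -[f (s i)]/((f \o s) i) fst IHk //; lia.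
Qed.

Lemma Q_series_inv k j : Q k j = series_inv (sigma^~ j) k.
Proof. by rewrite /Q /series_inv; congr nth; elim: k => //= k ->. Qed.

Lemma top_coefs_series_inv (R : nzRingType) (P : nat -> {poly R}) d (a b qa qb : nat -> R) :
  (forall i, (0 < i)%N -> top_coefs (P i) (d * i) (a i) (b i)) ->
  qa 0 = 1 -> qb 0 = 0 ->
  (forall m, qa m.+1 = - \sum_(1 <= i < m.+2) a i * qa (m.+1 - i)%N) ->
  (forall m, qb m.+1 =
     - \sum_(1 <= i < m.+2) (a i * qb (m.+1 - i)%N + b i * qa (m.+1 - i)%N)) ->
  forall m, top_coefs (series_inv P m) (d * m) (qa m) (qb m).
Proof.
move=> Ptop qa0 qb0 qaS qbS; elim/ltn_ind=> -[|m] IHm.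
  by rewrite series_inv0 qa0 qb0 muln0; apply: top_coefs1.
rewrite series_invS qaS qbS; apply/top_coefsN/top_coefs_sum => i.
rewrite mem_index_iota => /andP[i_gt0 i_lt].
rewrite (_ : d * m.+1 = d * i + d * (m.+1 - i))%N; last by rewrite -mulnDr subnKC // -ltnS.
by apply: top_coefsM; [apply: Ptop | apply: IHm; lia].
Qed.

Section AlternatingBinomialSums.
Variable R : nzRingType.

Lemma sum_alt_binom n :
  \sum_(0 <= i < n.+1) (-1) ^+ (n - i) * 'C(n, i)%:R = (n == 0)%:R :> R.
Proof.
rewrite big_mkord -expr0n -[X in _ = X ^+ _](addNr 1) (exprDn_comm _ (commr1 _)).
by apply: eq_bigr => i _; rewrite expr1n mulr1 mulr_natr.
Qed.

Lemma sum_alt_binom_mul n :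
  \sum_(0 <= i < n.+1) (-1) ^+ (n - i) * (i * 'C(n, i))%:R = (n == 1)%:R :> R.
Proof.
case: n => [|n]; first by rewrite big_nat1 mul0n mulr0.
rewrite big_ltn // mul0n mulr0 add0r big_add1 /=.
under eq_big_nat => i _ do rewrite subSS -mul_bin_diag mulnC natrM mulr_natr mulrnAr.
by rewrite sumrMnl /= sum_alt_binom; case: n => [|n]; rewrite ?mulr1n ?mul0rn.
Qed.

End AlternatingBinomialSums.

Definition Q_lead k : rat := (-1) ^+ k * sigma_lead k.

Definition Q_sublead k : rat :=
  (-1) ^+ k * ((2 * k)%:R - 5) * k%:R / (3 * 2 ^+ k * k`!%:R).

Section ConvolutionTerms.
Variables m i : nat.
Hypothesis le_im : (i <= m)%N.

Let factE : m`!%:R = 'C(m, i)%:R * (i`!%:R * (m - i)`!%:R) :> rat.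
Proof. by rewrite -!natrM bin_fact. Qed.

Let exp2E : 2 ^+ m = 2 ^+ i * 2 ^+ (m - i) :> rat.
Proof. by rewrite -exprD subnKC. Qed.

Let bin_neq0 : 'C(m, i)%:R != 0 :> rat.
Proof. by rewrite pnatr_eq0 -lt0n bin_gt0. Qed.

Lemma sigma_lead_Q_lead :
  sigma_lead i * Q_lead (m - i) = (-1) ^+ (m - i) * 'C(m, i)%:R / (2 ^+ m * m`!%:R).
Proof.
rewrite /Q_lead /sigma_lead factE exp2E.
by field; rewrite bin_neq0 !natr_fact_neq0 !exp2_neq0.
Qed.

Lemma sigma_lead_Q_sublead :
  sigma_lead i * Q_sublead (m - i) + sigma_sublead i * Q_lead (m - i) =
  ((2 * m%:R ^+ 2 - 5 * m%:R) * ((-1) ^+ (m - i) * 'C(m, i)%:R) +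
   (4 - 4 * m%:R) * ((-1) ^+ (m - i) * (i * 'C(m, i))%:R)) / (3 * 2 ^+ m * m`!%:R).
Proof.
rewrite /Q_lead /Q_sublead /sigma_lead /sigma_sublead factE exp2E.
rewrite !natrM (natrB _ le_im) natrD ?natrM.
by field; rewrite bin_neq0 !natr_fact_neq0 !exp2_neq0.
Qed.

End ConvolutionTerms.

Lemma Q_leadS m :
  Q_lead m.+1 = - \sum_(1 <= i < m.+2) sigma_lead i * Q_lead (m.+1 - i).
Proof.
have : \sum_(0 <= i < m.+2) sigma_lead i * Q_lead (m.+1 - i) = 0.
  under eq_big_nat => i /andP[_ lt_i] do rewrite (@sigma_lead_Q_lead m.+1 i lt_i).
  by rewrite -mulr_suml sum_alt_binom mul0r.
by rewrite big_ltn // sigma_lead0 mul1r subn0 => /eqP; rewrite addr_eq0 => /eqP.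
Qed.

Lemma Q_subleadS m :
  Q_sublead m.+1 = - \sum_(1 <= i < m.+2)
    (sigma_lead i * Q_sublead (m.+1 - i) + sigma_sublead i * Q_lead (m.+1 - i)).
Proof.
have : \sum_(0 <= i < m.+2)
    (sigma_lead i * Q_sublead (m.+1 - i) + sigma_sublead i * Q_lead (m.+1 - i)) = 0.
  under eq_big_nat => i /andP[_ lt_i] do rewrite (@sigma_lead_Q_sublead m.+1 i lt_i).
  rewrite -mulr_suml big_split -!mulr_sumr sum_alt_binom sum_alt_binom_mul.
  by case: m => [|m]; rewrite ?subrr !mulr0 ?add0r ?mul0r.
rewrite big_ltn // sigma_lead0 sigma_sublead0 mul1r mul0r addr0 subn0.
by move/eqP; rewrite addr_eq0 => /eqP.
Qed.

Lemma sigma_subleadSE k :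
  sigma_sublead k.+1 = - ((2 * k.+1 + 1)%:R / (3 * 2 ^+ k.+1 * k`!%:R)).
Proof.
rewrite /sigma_sublead factS natrM.
by field; rewrite natr_fact_neq0 exp2_neq0 nat1r pnatr_eq0.
Qed.

Lemma Q_subleadSE k :
  Q_sublead k.+1 = (-1) ^+ k.+1 * ((2 * k.+1)%:R - 5) / (3 * 2 ^+ k.+1 * k`!%:R).
Proof.
rewrite /Q_sublead factS natrM.
by field; rewrite natr_fact_neq0 exp2_neq0 nat1r pnatr_eq0.
Qed.

Definition Q_poly k : {poly rat} := series_inv sigma_poly k.

Lemma Q_polyE k n : (Q_poly k).[n.+1%:R] = Q k n.+1.
Proof.
rewrite Q_series_inv -horner_evalE; apply: rmorph_series_inv => i /=.
by rewrite horner_evalE sigma_polyE.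
Qed.

Lemma top_coefs_Q_poly k : top_coefs (Q_poly k) (2 * k) (Q_lead k) (Q_sublead k).
Proof.
apply: top_coefs_series_inv => [i _||||]; first exact: top_coefs_sigma_poly.
- by rewrite /Q_lead sigma_lead0 mulr1.
- by rewrite /Q_sublead !mulr0 mul0r.
- exact: Q_leadS.
- exact: Q_subleadS.
Qed.

Theorem lemma2p7 (k : nat) (hk : (1 <= k)%N) :
  (exists P : {poly rat},
     (forall j : nat, (0 < j)%N -> sigma k j = P.[j%:R]) /\
     (size P <= (2 * k).+1)%N /\
     P`_(2 * k) = 1 / (2 ^+ k * (k`!)%:R) /\
     P`_((2 * k).-1) = - ((2 * k + 1)%:R / (3 * 2 ^+ k * ((k.-1)`!)%:R))) /\
  (exists P : {poly rat},
     (forall j : nat, (0 < j)%N -> Q k j = P.[j%:R]) /\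
     (size P <= (2 * k).+1)%N /\
     P`_(2 * k) = (-1) ^+ k / (2 ^+ k * (k`!)%:R) /\
     P`_((2 * k).-1) =
       (-1) ^+ k * ((2 * k)%:R - 5) / (3 * 2 ^+ k * ((k.-1)`!)%:R)).
Proof.
case: k hk => // k _.
have deg_gt0 : (0 < 2 * k.+1)%N by rewrite muln_gt0.
split.
- have [sizeP leadP subP] := top_coefs_sigma_poly k.+1.
  exists (sigma_poly k.+1); split; first by case=> // n _; rewrite sigma_polyE.
  by rewrite -subcoefE // subP leadP sigma_subleadSE.
- have [sizeP leadP subP] := top_coefs_Q_poly k.+1.
  exists (Q_poly k.+1); split; first by case=> // n _; rewrite Q_polyE.
  by rewrite -subcoefE // subP leadP Q_subleadSE /Q_lead /sigma_lead mul1r.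
Qed.
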